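(* Let $\phi\in[\tfrac{\pi}{2},\pi]$ and $C_\phi=\mathrm{diag}(1,1,1,e^{i\phi})$. Define $$b=\arccos\!\Big(\frac{\frac{1}{\sqrt2}-\cos^2\frac{\phi}{2}}{\sin^2\frac{\phi}{2}}\Big),\quad p=\sqrt{\tfrac12\Big(1+\tfrac{\sqrt2-1}{\tan(\phi/2)}\Big)},\quad q=\sqrt{\tfrac12\Big(1-\tfrac{\sqrt2-1}{\tan(\phi/2)}\Big)}$$ (with $\tfrac{\sqrt2-1}{\tan(\pi/2)}:=0$), and $U_1=\begin{pmatrix} ip & iq\\ -q & p\end{pmatrix}$, $U_2=\begin{pmatrix} ip & -q\\ -iq & -p\end{pmatrix}$. Then $$e^{\frac{\pi}{4}\frac{i}{2}\sigma_z\otimes\sigma_z}=e^{-i\frac{\phi}{2}}\big(e^{i\frac{\phi}{4}\sigma_z}\otimes U_1e^{i\frac{\phi}{4}\sigma_z}\big)\,C_\phi\,\big(e^{i\frac{\phi}{4}\sigma_z}\otimes e^{\frac{i}{2}(b+\pi)\sigma_y}e^{i\frac{\phi}{4}\sigma_z}\big)\,C_\phi\,(I\otimes U_2).$$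
   Context: $\sigma_y,\sigma_z$ are Pauli matrices, $I$ the $2\times2$ identity; the basis is $|00\rangle,|01\rangle,|10\rangle,|11\rangle$ with the first tensor factor being the first qubit and $\sigma_z=\mathrm{diag}(1,-1)$. *)

From HB Require Import structures.
From mathcomp Require Import all_boot all_order all_algebra.
From mathcomp Require Import all_classical all_reals all_analysis.
From mathcomp Require Import complex mxtens.
Set Implicit Arguments. Unset Strict Implicit. Unset Printing Implicit Defensive.
Import Order.TTheory GRing.Theory Num.Theory numFieldNormedType.Exports.
Local Open Scope ring_scope.
Local Open Scope complex_scope.

Section QDefs.
Variable R : realType.
Local Notation C := R[i].

Definition expm_psum n (A : 'M[C]_n) (N : nat) : 'M[C]_n :=
  \sum_(k < N) ((k`!)%:R)^-1 *: A ^+ k.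

Definition expm n (A : 'M[C]_n) : 'M[C]_n :=
  \matrix_(i, j) (limn (fun N => @complex.Re R (expm_psum A N i j))
               +i* limn (fun N => @complex.Im R (expm_psum A N i j))).

Definition expi (x : R) : C := cos x +i* sin x.

Definition sigma_y : 'M[C]_2 :=
  \matrix_(i, j) (if (i == 0 :> nat) && (j == 1 :> nat) then - 'i
                  else if (i == 1 :> nat) && (j == 0 :> nat) then 'i else 0).
Definition sigma_z : 'M[C]_2 :=
  \matrix_(i, j) (if i == j then (if i == 0 :> nat then 1 else -1) else 0).

(* C_phi = diag(1,1,1,e^{i phi}) in basis |00>,|01>,|10>,|11> *)
Definition Cphi (phi : R) : 'M[C]_4 :=
  \matrix_(i, j) (if i == j then (if i == 3 :> nat then expi phi else 1) else 0).

Definition rphi (phi : R) : R :=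
  if phi == pi then 0 else (Num.sqrt 2 - 1) / tan (phi / 2).

Definition bphi (phi : R) : R :=
  acos (((Num.sqrt 2)^-1 - cos (phi / 2) ^+ 2) / sin (phi / 2) ^+ 2).
Definition pphi (phi : R) : R := Num.sqrt (2^-1 * (1 + rphi phi)).
Definition qphi (phi : R) : R := Num.sqrt (2^-1 * (1 - rphi phi)).

Definition mx2 (a b c d : C) : 'M[C]_2 :=
  \matrix_(i, j) (if i == 0 :> nat then (if j == 0 :> nat then a else b)
                  else (if j == 0 :> nat then c else d)).

Definition U1 (phi : R) : 'M[C]_2 :=
  let p := (pphi phi)%:C in let q := (qphi phi)%:C in
  mx2 ('i * p) ('i * q) (- q) p.
Definition U2 (phi : R) : 'M[C]_2 :=
  let p := (pphi phi)%:C in let q := (qphi phi)%:C in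
  mx2 ('i * p) (- q) (- ('i * q)) (- p).

End QDefs.

From HB Require Import structures.
From mathcomp Require Import all_boot all_order all_algebra.
From mathcomp Require Import all_classical all_reals all_analysis.
From mathcomp Require Import complex mxtens.
From mathcomp Require Import ring lra.
Import Order.TTheory GRing.Theory Num.Theory numFieldNormedType.Exports.
Local Open Scope ring_scope.
Local Open Scope complex_scope.
Set Implicit Arguments. Unset Strict Implicit. Unset Printing Implicit Defensive.

(* Every operator in the identity is block diagonal with respect to the first
   qubit, i.e. of the form |0><0| (x) A0 + |1><1| (x) A1: the left-hand side has
   blocks diag (e^{i pi/8}, e^{-i pi/8}) and its inverse, and C_phi has blocks 1 and
   diag (1, e^{i phi}).  Moving C_phi through the diagonal factors e^{i phi/4 sigma_z}
   costs only a global phase, so both blocks of the right-hand side become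
   U1 Z V Z U2, with Z = e^{+-i phi/4 sigma_z} and V the sigma_y rotation by b + pi.
   Multiplying out these 2x2 products leaves three trigonometric relations, which
   say that with r = p^2 - q^2
     (sin (b/2) cos (phi/2), cos (b/2)) = cos (pi/8) (r, 2pq).
   They follow from sin (b/2) sin (phi/2) = sin (pi/8), which is the definition of b,
   and r tan (phi/2) = tan (pi/8) = sqrt 2 - 1, which is the definition of p and q. *)

Section MatrixExponential.
Variable R : realType.
Local Notation C := R[i].
Local Open Scope classical_set_scope.

Lemma Re_sum I (r : seq I) (P : pred I) (F : I -> C) :
  complex.Re (\sum_(i <- r | P i) F i) = \sum_(i <- r | P i) complex.Re (F i).
Proof. exact: (raddf_sum (@complex.Re R : Rcomplex R -> R)). Qed.

Lemma Im_sum I (r : seq I) (P : pred I) (F : I -> C) :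
  complex.Im (\sum_(i <- r | P i) F i) = \sum_(i <- r | P i) complex.Im (F i).
Proof. exact: (raddf_sum (@complex.Im R : Rcomplex R -> R)). Qed.

Lemma Re_mulr_real (w : C) (x : R) : complex.Re (w * x%:C) = complex.Re w * x.
Proof. by case: w => a b /=; ring. Qed.

Lemma Im_mulr_real (w : C) (x : R) : complex.Im (w * x%:C) = complex.Im w * x.
Proof. by case: w => a b /=; ring. Qed.

Lemma expm_cvg n (A M : 'M[C]_n) :
  (forall i j, (fun N => \sum_(k < N) (k`!%:R)^-1 * complex.Re ((A ^+ k) i j)) @ \oo
     --> complex.Re (M i j)) ->
  (forall i j, (fun N => \sum_(k < N) (k`!%:R)^-1 * complex.Im ((A ^+ k) i j)) @ \oo
     --> complex.Im (M i j)) ->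
  expm A = M.
Proof.
move=> cvgRe cvgIm; apply/matrixP => i j; rewrite mxE.
have invfact k : ((k`!)%:R : C)^-1 = ((k`!%:R : R)^-1)%:C.
  by rewrite fmorphV rmorph_nat.
have -> : (fun N => complex.Re (expm_psum A N i j)) =
          (fun N => \sum_(k < N) (k`!%:R)^-1 * complex.Re ((A ^+ k) i j)).
  apply/funext => N; rewrite /expm_psum summxE Re_sum.
  by apply: eq_bigr => k _; rewrite mxE invfact mulrC Re_mulr_real mulrC.
have -> : (fun N => complex.Im (expm_psum A N i j)) =
          (fun N => \sum_(k < N) (k`!%:R)^-1 * complex.Im ((A ^+ k) i j)).
  apply/funext => N; rewrite /expm_psum summxE Im_sum.
  by apply: eq_bigr => k _; rewrite mxE invfact mulrC Im_mulr_real mulrC.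
by rewrite (cvg_lim _ (cvgRe i j)) // (cvg_lim _ (cvgIm i j)) //; case: (M i j).
Qed.

Lemma ReIm_iX k :
  complex.Re ('i ^+ k : C) = (~~ odd k)%:R * (-1) ^+ k./2 /\
  complex.Im ('i ^+ k : C) = (odd k)%:R * (-1) ^+ k.-1./2.
Proof.
elim: k => [|k [IHRe IHIm]]; first by rewrite expr0 /=; split; ring.
rewrite exprS mulrC ReiNIm ImiRe IHRe IHIm; split => //=.
by case: k {IHRe IHIm} => [|k] /=; rewrite ?negbK ?exprS; ring.
Qed.

Lemma cvg_Re_exp_series (x : R) :
  (fun N => \sum_(k < N) (k`!%:R)^-1 * complex.Re (('i * x%:C) ^+ k)) @ \oo --> cos x.
Proof.
suff -> : (fun N => \sum_(k < N) (k`!%:R)^-1 * complex.Re (('i * x%:C) ^+ k)) =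
          series (cos_coeff x).
  by rewrite unlock; exact: is_cvg_series_cos_coeff.
apply/funext => N; rewrite /series /= big_mkord; apply: eq_bigr => k _.
rewrite exprMn -rmorphXn Re_mulr_real (ReIm_iX k).1 /cos_coeff /= -exprnP; ring.
Qed.

Lemma cvg_Im_exp_series (x : R) :
  (fun N => \sum_(k < N) (k`!%:R)^-1 * complex.Im (('i * x%:C) ^+ k)) @ \oo --> sin x.
Proof.
suff -> : (fun N => \sum_(k < N) (k`!%:R)^-1 * complex.Im (('i * x%:C) ^+ k)) =
          series (sin_coeff x).
  by rewrite unlock; exact: is_cvg_series_sin_coeff.
apply/funext => N; rewrite /series /= big_mkord; apply: eq_bigr => k _.
rewrite exprMn -rmorphXn Im_mulr_real (ReIm_iX k).2 /sin_coeff /=; ring.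
Qed.

Lemma cvg_exp_series_lincomb (f : C -> R) (a b : C) (x : R) :
  (forall u v, f (a * u%:C + b * v%:C) = f a * u + f b * v) ->
  (fun N => \sum_(k < N) (k`!%:R)^-1 * f (a * (complex.Re (('i * x%:C) ^+ k))%:C
                                       + b * (complex.Im (('i * x%:C) ^+ k))%:C))
    @ \oo --> f (a * (cos x)%:C + b * (sin x)%:C).
Proof.
move=> f_lin; rewrite f_lin.
have -> : (fun N => \sum_(k < N) (k`!%:R)^-1 * f (a * (complex.Re (('i * x%:C) ^+ k))%:C
                                       + b * (complex.Im (('i * x%:C) ^+ k))%:C)) =
  (fun N => f a * \sum_(k < N) (k`!%:R)^-1 * complex.Re (('i * x%:C) ^+ k) +
            f b * \sum_(k < N) (k`!%:R)^-1 * complex.Im (('i * x%:C) ^+ k)).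
  apply/funext => N; rewrite !mulr_sumr -big_split /=.
  by apply: eq_bigr => k _; rewrite f_lin; ring.
by apply: cvgD; apply: cvgMr; [exact: cvg_Re_exp_series | exact: cvg_Im_exp_series].
Qed.

Lemma expm_trig n (A : 'M[C]_n) (x : 'I_n -> 'I_n -> R) (a b : 'I_n -> 'I_n -> C) :
  (forall k i j, (A ^+ k) i j = a i j * (complex.Re (('i * (x i j)%:C) ^+ k))%:C
                               + b i j * (complex.Im (('i * (x i j)%:C) ^+ k))%:C) ->
  expm A = \matrix_(i, j) (a i j * (cos (x i j))%:C + b i j * (sin (x i j))%:C).
Proof.
move=> powA; apply: expm_cvg => i j; rewrite mxE;
  under eq_fun do under eq_bigr do rewrite powA;
  apply: cvg_exp_series_lincomb => u v.
  by case: (a i j) => ? ?; case: (b i j) => ? ? /=; ring.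
by case: (a i j) => ? ?; case: (b i j) => ? ? /=; ring.
Qed.

End MatrixExponential.

Section SpecialExponentials.
Variable R : realType.
Local Notation C := R[i].

Lemma mx2_mul (a b c d a' b' c' d' : C) :
  mx2 a b c d *m mx2 a' b' c' d' =
  mx2 (a * a' + b * c') (a * b' + b * d') (c * a' + d * c') (c * b' + d * d').
Proof.
apply/matrixP => i j; rewrite !mxE !big_ord_recr big_ord0 /= !mxE /= add0r.
by case: i => [[|[|//]] ?]; case: j => [[|[|//]] ?].
Qed.

Lemma scale_mx2 (k a b c d : C) : k *: mx2 a b c d = mx2 (k * a) (k * b) (k * c) (k * d).
Proof.
by apply/matrixP => i j; rewrite !mxE; case: i => [[|[|//]] ?]; case: j => [[|[|//]] ?].
Qed.

Lemma diag_mx_exprn n (d : 'rV[C]_n) k :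
  diag_mx d ^+ k = diag_mx (map_mx (fun z => z ^+ k) d).
Proof.
elim: k => [|k IHk].
  by apply/matrixP => i j; rewrite !mxE expr0.
by apply/matrixP => i j; rewrite exprS IHk -mulmxE mul_diag_mx !mxE mulrnAr exprS.
Qed.

Lemma expm_diag n (d : 'rV[R]_n) :
  expm (diag_mx (map_mx (fun t => 'i * t%:C) d)) = diag_mx (map_mx (@expi R) d).
Proof.
rewrite (@expm_trig _ _ _ (fun i _ => d 0 i) (fun i j => (i == j)%:R)
                          (fun i j => (i == j)%:R * 'i)).
  by apply/matrixP => i j; rewrite !mxE; case: eqP => _; rewrite /expi /=; simpc.
move=> k i j; rewrite diag_mx_exprn !mxE.
by case: eqP => _; rewrite ?mul0r ?addr0 // !mul1r [LHS]complexE mulrC.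
Qed.

Definition rotmx (w : C) : 'M[C]_2 :=
  mx2 (complex.Re w)%:C (complex.Im w)%:C (- complex.Im w)%:C (complex.Re w)%:C.

Lemma rotmxX (w : C) k : rotmx w ^+ k = rotmx (w ^+ k).
Proof.
elim: k => [|k IHk].
  apply/matrixP => i j; rewrite !mxE expr0.
  by case: i => [[|[|//]] ?]; case: j => [[|[|//]] ?] /=; rewrite ?oppr0.
rewrite exprS IHk -mulmxE mx2_mul exprS.
case: (w ^+ k) => a b; case: w {IHk} => c d; rewrite /rotmx /=.
by congr mx2; apply/eqP; rewrite eq_complex /=; apply/andP; split; apply/eqP; ring.
Qed.

Lemma expm_rotmx (x : R) :
  expm (rotmx ('i * x%:C)) = mx2 (cos x)%:C (sin x)%:C (- sin x)%:C (cos x)%:C.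
Proof.
rewrite (@expm_trig _ _ _ (fun _ _ => x) (fun i j => (1%:M : 'M[C]_2) i j)
                          (fun i j => mx2 0 1 (-1) 0 i j)).
  apply/matrixP => i j; rewrite !mxE.
  by case: i => [[|[|//]] ?]; case: j => [[|[|//]] ?] /=; simpc.
move=> k i j; rewrite rotmxX !mxE.
by case: i => [[|[|//]] ?]; case: j => [[|[|//]] ?] /=; simpc.
Qed.

End SpecialExponentials.

Section Controlled.
Variable R : realType.
Local Notation C := R[i].
Implicit Types A B : 'M[C]_2.

Definition ctrlmx A0 A1 : 'M[C]_(2 * 2) := delta_mx 0 0 *t A0 + delta_mx 1 1 *t A1.

Lemma ctrlmxM A0 A1 B0 B1 :
  ctrlmx A0 A1 *m ctrlmx B0 B1 = ctrlmx (A0 *m B0) (A1 *m B1).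
Proof.
rewrite mulmxDl !mulmxDr !tensmx_mul !mul_delta_mx_cond /=.
by rewrite !mulr0n !mulr1n !tens0mx addr0 add0r.
Qed.

Lemma tensmxZr m n p q (c : C) (A : 'M[C]_(m, n)) (B : 'M[C]_(p, q)) :
  A *t (c *: B) = c *: (A *t B).
Proof. by apply/matrixP => i j; rewrite !mxE mulrCA. Qed.

Lemma scale_ctrlmx (c : C) A0 A1 : c *: ctrlmx A0 A1 = ctrlmx (c *: A0) (c *: A1).
Proof. by rewrite /ctrlmx scalerDr !tensmxZr. Qed.

Lemma diag_tensmx (d0 d1 : C) B : mx2 d0 0 0 d1 *t B = ctrlmx (d0 *: B) (d1 *: B).
Proof.
apply/matrixP => i j.
case: (mxtens_indexP i) => i1 i2; case: (mxtens_indexP j) => j1 j2.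
rewrite /ctrlmx [in RHS]mxE !tensmxE !mxE.
by case: i1 => [[|[|//]] ?]; case: j1 => [[|[|//]] ?] /=; ring.
Qed.

Lemma tens1mx B : (1%:M : 'M[C]_2) *t B = ctrlmx B B.
Proof.
have -> : (1%:M : 'M[C]_2) = mx2 1 0 0 1.
  by apply/matrixP => i j; rewrite !mxE; case: i => [[|[|//]] ?]; case: j => [[|[|//]] ?].
by rewrite diag_tensmx !scale1r.
Qed.

Lemma Cphi_ctrlmx (phi : R) : Cphi phi = ctrlmx 1%:M (mx2 1 0 0 (expi phi)).
Proof.
apply/matrixP => i j.
case: (@mxtens_indexP 2 2 i) => i1 i2; case: (@mxtens_indexP 2 2 j) => j1 j2.
rewrite /ctrlmx [in RHS]mxE !tensmxE !mxE.
case: i1 => [[|[|//]] ?]; case: j1 => [[|[|//]] ?];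
case: i2 => [[|[|//]] ?]; case: j2 => [[|[|//]] ?] /=; ring.
Qed.

End Controlled.

Section Pauli.
Variable R : realType.
Local Notation C := R[i].

Lemma real_complex_divn (x : R) n : (x / n%:R)%:C = x%:C / n%:R :> C.
Proof. by rewrite rmorphM fmorphV rmorph_nat. Qed.

Lemma expm_sigma_z (x : R) :
  expm (('i * x%:C) *: sigma_z R) = mx2 (expi x) 0 0 (expi (- x)).
Proof.
pose d : 'rV[R]_2 := \row_i (if i == 0 :> nat then x else - x).
have -> : ('i * x%:C) *: sigma_z R = diag_mx (map_mx (fun t => 'i * t%:C) d).
  apply/matrixP => i j; rewrite !mxE.
  by case: i => [[|[|//]] ?]; case: j => [[|[|//]] ?] /=; rewrite ?rmorphN; ring.
rewrite expm_diag; apply/matrixP => i j; rewrite !mxE.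
by case: i => [[|[|//]] ?]; case: j => [[|[|//]] ?].
Qed.

Lemma expm_sigma_y (x : R) :
  expm (('i / 2 * x%:C) *: sigma_y R) =
  mx2 (cos (x / 2))%:C (sin (x / 2))%:C (- sin (x / 2))%:C (cos (x / 2))%:C.
Proof.
rewrite -expm_rotmx (_ : 'i / 2 * x%:C = 'i * (x / 2)%:C); last first.
  by rewrite real_complex_divn; ring.
congr expm; apply/matrixP => i j; rewrite !mxE.
by case: i => [[|[|//]] ?]; case: j => [[|[|//]] ?];
  apply/eqP; rewrite eq_complex /=; apply/andP; split; apply/eqP; ring.
Qed.

Lemma expm_sigma_zz (t : R) :
  expm (t%:C * ('i / 2) *: (sigma_z R *t sigma_z R)) =
  ctrlmx (mx2 (expi (t / 2)) 0 0 (expi (- (t / 2))))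
         (mx2 (expi (- (t / 2))) 0 0 (expi (t / 2))).
Proof.
pose d : 'rV[R]_(2 * 2) := \row_k
  (if (mxtens_unindex k).1 == (mxtens_unindex k).2 then t / 2 else - (t / 2)).
have -> : t%:C * ('i / 2) *: (sigma_z R *t sigma_z R) =
          diag_mx (map_mx (fun t => 'i * t%:C) d).
  apply/matrixP => k l.
  case: (mxtens_indexP k) => i1 i2; case: (mxtens_indexP l) => j1 j2.
  rewrite [in LHS]mxE tensmxE !mxE !mxtens_indexK.
  rewrite (inj_eq (can_inj (@mxtens_indexK 2 2))) /=.
  case: i1 => [[|[|//]] ?]; case: j1 => [[|[|//]] ?];
  case: i2 => [[|[|//]] ?]; case: j2 => [[|[|//]] ?] /=;
  by rewrite ?rmorphN ?real_complex_divn; field.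
rewrite expm_diag; apply/matrixP => k l.
case: (mxtens_indexP k) => i1 i2; case: (mxtens_indexP l) => j1 j2.
rewrite /ctrlmx [in RHS]mxE !tensmxE !mxE !mxtens_indexK.
rewrite (inj_eq (can_inj (@mxtens_indexK 2 2))) /=.
case: i1 => [[|[|//]] ?]; case: j1 => [[|[|//]] ?];
case: i2 => [[|[|//]] ?]; case: j2 => [[|[|//]] ?] /=; ring.
Qed.

End Pauli.

Section Phases.
Variable R : realType.
Local Notation C := R[i].
Local Notation Z t := (mx2 (expi t) 0 0 (expi (- t)) : 'M[C]_2).

Lemma expiD (x y : R) : expi x * expi y = expi (x + y).
Proof.
rewrite /expi cosD sinD; apply/eqP; rewrite eq_complex /=.
by apply/andP; split; apply/eqP; ring.
Qed.

Lemma expi0 : expi 0 = 1 :> C.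
Proof. by rewrite /expi cos0 sin0. Qed.

Lemma expiNr (x : R) : expi x * expi (- x) = 1.
Proof. by rewrite expiD subrr expi0. Qed.

Lemma expi_neq0 (x : R) : expi x != 0.
Proof. by apply/eqP => x0; have /eqP := expiNr x; rewrite x0 mul0r eq_sym oner_eq0. Qed.

Lemma expiN (x : R) : expi (- x) = (expi x)^-1.
Proof. by rewrite -[RHS]mulr1 -(expiNr x) mulKf ?expi_neq0. Qed.

Lemma scale_sandwich (a b c : C) (U V W X D : 'M[C]_2) :
  c *: ((a *: (U *m X)) *m D *m (b *: (V *m X)) *m D *m W) =
  (c * a * b) *: (U *m (X *m D) *m V *m (X *m D) *m W).
Proof.
by do ![rewrite -scalemxAl | rewrite -scalemxAr]; rewrite !scalerA !mulmxA.
Qed.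

Lemma Z_mul_phase (phi : R) :
  Z (phi / 4) *m mx2 1 0 0 (expi phi) = expi (phi / 2) *: Z (- (phi / 4)).
Proof.
rewrite mx2_mul scale_mx2 opprK !expiD !mulr0 !mul0r !addr0 !add0r !mulr1.
by congr mx2; congr expi; field.
Qed.

Lemma Cphi_sandwich (phi : R) (U V W : 'M[C]_2) :
  expi (- (phi / 2)) *:
    ((Z (phi / 4) *t (U *m Z (phi / 4))) *m Cphi phi
     *m (Z (phi / 4) *t (V *m Z (phi / 4))) *m Cphi phi *m ((1%:M : 'M[C]_2) *t W)) =
  ctrlmx (U *m (Z (phi / 4) *m V *m Z (phi / 4)) *m W)
         (U *m (Z (- (phi / 4)) *m V *m Z (- (phi / 4))) *m W).
Proof.
rewrite !diag_tensmx tens1mx Cphi_ctrlmx !ctrlmxM scale_ctrlmx !scale_sandwich.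
congr ctrlmx.
  rewrite !mulmx1 !expiD (_ : _ + _ = 0); first by rewrite expi0 scale1r !mulmxA.
  by field.
rewrite Z_mul_phase; do ![rewrite -scalemxAl | rewrite -scalemxAr].
rewrite !scalerA !expiD (_ : _ + _ = 0).
  by rewrite expi0 scale1r !mulmxA.
by field.
Qed.

Lemma Z_rot_Z (t a b : R) :
  Z t *m mx2 a%:C b%:C (- b)%:C a%:C *m Z t =
  mx2 (expi (t + t) * a%:C) b%:C (- b)%:C (expi (- (t + t)) * a%:C).
Proof.
rewrite !mx2_mul opprD -!expiD !expiN rmorphN.
by congr mx2; field; rewrite ?expi_neq0.
Qed.

Lemma U1_rot_U2 (p q al be x y : R) :
  2 * p * q * al * cos x + (p ^+ 2 - q ^+ 2) * be = 0 ->
  - al * sin x * (p ^+ 2 + q ^+ 2) = sin y ->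
  - al * (p ^+ 2 - q ^+ 2) * cos x + 2 * p * q * be = cos y ->
  mx2 ('i * p%:C) ('i * q%:C) (- q%:C) p%:C
    *m mx2 (expi x * al%:C) be%:C (- be)%:C (expi (- x) * al%:C)
    *m mx2 ('i * p%:C) (- q%:C) (- ('i * q%:C)) (- p%:C)
  = mx2 (expi y) 0 0 (expi (- y)).
Proof.
move=> off_diag sin_y cos_y; rewrite /expi !cosN !sinN !mx2_mul.
by congr mx2; apply/eqP; rewrite eq_complex /=; apply/andP; split; apply/eqP; lra.
Qed.

End Phases.

Lemma sqr_inj_ge0 (R : realDomainType) (x y : R) :
  0 <= x -> 0 <= y -> x ^+ 2 = y ^+ 2 -> x = y.
Proof. by move=> x0 y0 /eqP; rewrite eqrXn2 // => /eqP. Qed.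

(* Read A = sin (b/2), B = cos (b/2), c = cos (phi/2), s = sin (phi/2),
   C8 = cos (pi/8), S8 = sin (pi/8) and r = p^2 - q^2; [rs] says that
   r tan (phi/2) = tan (pi/8). *)
Section HalfAngleAlgebra.
Variables (R : realFieldType) (A B c s C8 S8 p q r : R).
Hypotheses (B_ge0 : 0 <= B) (AB1 : A ^+ 2 + B ^+ 2 = 1).
Hypotheses (cs1 : c ^+ 2 + s ^+ 2 = 1) (s_gt0 : 0 < s).
Hypotheses (C8_gt0 : 0 < C8) (CS8 : C8 ^+ 2 + S8 ^+ 2 = 1).
Hypotheses (As : A * s = S8) (rs : r * s * C8 = S8 * c).
Hypotheses (p_ge0 : 0 <= p) (q_ge0 : 0 <= q).
Hypotheses (p2 : p ^+ 2 = (1 + r) / 2) (q2 : q ^+ 2 = (1 - r) / 2).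

Lemma r_C8 : r * C8 = A * c.
Proof.
apply: (mulIf (lt0r_neq0 s_gt0)).
by rewrite mulrAC rs -As; ring.
Qed.

Lemma Ac_B_norm : (A * c) ^+ 2 + B ^+ 2 = C8 ^+ 2.
Proof.
have -> : (A * c) ^+ 2 + B ^+ 2 = A ^+ 2 * (c ^+ 2 + s ^+ 2) + B ^+ 2 - (A * s) ^+ 2.
  by ring.
by rewrite cs1 mulr1 AB1 As -CS8 addrK.
Qed.

Lemma pq_C8 : 2 * p * q * C8 = B.
Proof.
apply: sqr_inj_ge0 => //; first by rewrite !mulr_ge0 // ltW.
by rewrite !exprMn p2 q2 -[B ^+ 2](addKr ((A * c) ^+ 2)) Ac_B_norm -r_C8; field.
Qed.

Lemma pq_Ac : 2 * p * q * A * c = r * B.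
Proof.
apply: (mulIf (lt0r_neq0 C8_gt0)).
rewrite -pq_C8; transitivity (2 * p * q * C8 * (A * c)); first by ring.
by rewrite -r_C8; ring.
Qed.

Lemma pq_C8_sum : A * r * c + 2 * p * q * B = C8.
Proof.
apply: (mulIf (lt0r_neq0 C8_gt0)).
rewrite -[in RHS]expr2 -Ac_B_norm -pq_C8.
transitivity (A * c * (r * C8) + (2 * p * q * C8) ^+ 2); first by ring.
by rewrite r_C8; ring.
Qed.

End HalfAngleAlgebra.

Section Angles.
Variable R : realType.
Local Notation sqrt2 := (Num.sqrt 2 : R).

Lemma sqrt2_sq : sqrt2 ^+ 2 = 2.
Proof. by rewrite sqr_sqrtr // ler0n. Qed.

Lemma sqrt2_gt0 : 0 < sqrt2.
Proof. by rewrite sqrtr_gt0 ltr0n. Qed.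

Lemma invr_sqrt2 : sqrt2^-1 = sqrt2 / 2.
Proof.
have h0 := lt0r_neq0 sqrt2_gt0.
by apply: (mulfI h0); rewrite mulfV // mulrA -expr2 sqrt2_sq; field.
Qed.

Lemma sqrt2_ge1 : 1 <= sqrt2.
Proof. by have := sqrt2_sq; have := sqrt2_gt0; nra. Qed.

Lemma cos_half (x : R) : cos x = 2 * cos (x / 2) ^+ 2 - 1.
Proof.
have {1}-> : x = (x / 2) *+ 2 by rewrite mulr2n; field.
by rewrite cos_mulr2n mulr2n; ring.
Qed.

Lemma sin_half_sq (x : R) : sin (x / 2) ^+ 2 = (1 - cos x) / 2.
Proof. by rewrite sin2cos2 [in RHS]cos_half; field. Qed.

Lemma cos_pi4 : cos (pi / 4) = sqrt2^-1.
Proof.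
have pi_gt0 := @pi_gt0 R.
apply: sqr_inj_ge0.
- by apply: cos_ge0_pihalf; apply/andP; split; lra.
- by rewrite invr_ge0 ltW // sqrt2_gt0.
have := cos_half (pi / 2); rewrite cos_pihalf (_ : pi / 2 / 2 = pi / 4); last by field.
by rewrite exprVn sqrt2_sq => ?; lra.
Qed.

Lemma sin_pi8 : sin (pi / 8) = (sqrt2 - 1) * cos (pi / 8).
Proof.
have pi_gt0 := @pi_gt0 R.
have h2 := sqrt2_sq; have h0 := sqrt2_gt0.
have C8_ge0 : 0 <= cos (pi / 8 : R) by apply: cos_ge0_pihalf; apply/andP; split; lra.
apply: sqr_inj_ge0.
- by apply: sin_ge0_pi; apply/andP; split; lra.
- by apply: mulr_ge0 => //; nra.
have C8_sq : cos (pi / 8 : R) ^+ 2 = (2 + sqrt2) / 4.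
  have := cos_half (pi / 4); rewrite cos_pi4 invr_sqrt2.
  by rewrite (_ : pi / 4 / 2 = pi / 8); [lra | field].
rewrite sin2cos2 exprMn C8_sq; apply/eqP; rewrite -subr_eq0; apply/eqP.
transitivity (- sqrt2 * (sqrt2 ^+ 2 - 2) / 4); first by field.
by rewrite h2 subrr mulr0 mul0r.
Qed.

Section PhiRange.
Variable phi : R.
Hypothesis phi_range : pi / 2 <= phi <= pi.
Local Notation c := (cos (phi / 2)).
Local Notation s := (sin (phi / 2)).

Lemma cos_half_phi_ge0 : 0 <= c.
Proof.
have := @pi_gt0 R; case/andP: phi_range => *.
by apply: cos_ge0_pihalf; apply/andP; split; lra.
Qed.

Lemma sin_half_phi_gt0 : 0 < s.
Proof.
have := @pi_gt0 R; case/andP: phi_range => *.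
by apply: sin_gt0_pi; apply/andP; split; lra.
Qed.

Lemma cos_half_phi_sq : 2 * c ^+ 2 <= 1.
Proof.
have : cos phi <= 0.
  rewrite -[phi](subrK (pi / 2)) cosDpihalf oppr_le0.
  have := @pi_gt0 R; case/andP: phi_range => *.
  by apply: sin_ge0_pi; apply/andP; split; lra.
by rewrite (cos_half phi); lra.
Qed.

Lemma rphi_sin : rphi phi * s = (sqrt2 - 1) * c.
Proof.
rewrite /rphi; case: eqP => [->|_]; first by rewrite cos_pihalf; ring.
by rewrite /tan invf_div; field; exact: lt0r_neq0 sin_half_phi_gt0.
Qed.

Lemma rphi_ge0 : 0 <= rphi phi.
Proof.
have s_gt0 := sin_half_phi_gt0; have c_ge0 := cos_half_phi_ge0.
have : 0 <= (sqrt2 - 1) * c by rewrite mulr_ge0 // subr_ge0 sqrt2_ge1.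
by rewrite -rphi_sin pmulr_lge0.
Qed.

Lemma rphi_le1 : rphi phi <= 1.
Proof.
have s_gt0 := sin_half_phi_gt0; have c_ge0 := cos_half_phi_ge0.
have c_le_s : c <= s.
  by have := cos_half_phi_sq; have := cos2Dsin2 (phi / 2); nra.
have : (sqrt2 - 1) * c <= s.
  by have := sqrt2_sq; have := sqrt2_gt0; nra.
by rewrite -rphi_sin -ler_pdivlMr // divff ?lt0r_neq0.
Qed.

Local Notation x := (((sqrt2)^-1 - c ^+ 2) / s ^+ 2).

Lemma bphi_arg_range : -1 <= x <= 1.
Proof.
have s2_gt0 : 0 < s ^+ 2 by rewrite exprn_gt0 // sin_half_phi_gt0.
have hinv_ge : 1 / 2 <= sqrt2^-1.
  by rewrite invr_sqrt2; have := sqrt2_sq; have := sqrt2_gt0; nra.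
have hinv_le : sqrt2^-1 <= 1 by rewrite invf_le1 ?sqrt2_ge1 ?sqrt2_gt0.
have := cos_half_phi_sq; have := cos2Dsin2 (phi / 2) => cs1 c2.
apply/andP; split; first by rewrite ler_pdivlMr //; lra.
by rewrite ler_pdivrMr //; lra.
Qed.

Lemma bphi_range : 0 <= bphi phi <= pi.
Proof. by rewrite acos_ge0 ?acos_lepi ?bphi_arg_range. Qed.

Lemma cos_bphi : cos (bphi phi) * s ^+ 2 = sqrt2^-1 - c ^+ 2.
Proof.
rewrite /bphi acosK ?in_itv ?bphi_arg_range //.
by rewrite divfK // expf_neq0 // lt0r_neq0 // sin_half_phi_gt0.
Qed.

Lemma sin_half_bphi : sin (bphi phi / 2) * s = sin (pi / 8).
Proof.
have := @pi_gt0 R; case/andP: bphi_range => b_ge0 b_le_pi pi_gt0.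
apply: sqr_inj_ge0.
- apply: mulr_ge0; last exact: ltW sin_half_phi_gt0.
  by apply: sin_ge0_pi; apply/andP; split; lra.
- by apply: sin_ge0_pi; apply/andP; split; lra.
rewrite exprMn (sin_half_sq (bphi phi)) (_ : pi / 8 = pi / 4 / 2); last by field.
rewrite (sin_half_sq (pi / 4)) cos_pi4.
by have := cos_bphi; have := cos2Dsin2 (phi / 2); lra.
Qed.

Lemma pphi_sq : pphi phi ^+ 2 = (1 + rphi phi) / 2.
Proof.
rewrite sqr_sqrtr; first by rewrite mulrC.
by apply: mulr_ge0; [rewrite invr_ge0 ler0n | have := rphi_ge0; lra].
Qed.

Lemma qphi_sq : qphi phi ^+ 2 = (1 - rphi phi) / 2.
Proof.
rewrite sqr_sqrtr; first by rewrite mulrC.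
by apply: mulr_ge0; [rewrite invr_ge0 ler0n | have := rphi_le1; lra].
Qed.

Local Notation p := (pphi phi).
Local Notation q := (qphi phi).
Local Notation al := (cos ((bphi phi + pi) / 2)).
Local Notation be := (sin ((bphi phi + pi) / 2)).

Lemma U1_rot_U2_conditions :
  [/\ 2 * p * q * al * c + (p ^+ 2 - q ^+ 2) * be = 0,
      - al * s * (p ^+ 2 + q ^+ 2) = sin (pi / 8) &
      - al * (p ^+ 2 - q ^+ 2) * c + 2 * p * q * be = cos (pi / 8)].
Proof.
have := @pi_gt0 R; case/andP: bphi_range => b_ge0 b_le_pi pi_gt0.
have -> : (bphi phi + pi) / 2 = bphi phi / 2 + pi / 2 by field.
rewrite cosDpihalf sinDpihalf opprK pphi_sq qphi_sq.
have -> : (1 + rphi phi) / 2 - (1 - rphi phi) / 2 = rphi phi by field.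
have -> : (1 + rphi phi) / 2 + (1 - rphi phi) / 2 = 1 by field.
have B_ge0 : 0 <= cos (bphi phi / 2).
  by apply: cos_ge0_pihalf; apply/andP; split; lra.
have C8_gt0 : 0 < cos (pi / 8 : R).
  by apply: cos_gt0_pihalf; apply/andP; split; lra.
have rs : rphi phi * s * cos (pi / 8) = sin (pi / 8) * c.
  by rewrite rphi_sin sin_pi8; ring.
have p_ge0 : 0 <= p by exact: sqrtr_ge0.
have q_ge0 : 0 <= q by exact: sqrtr_ge0.
have AB1 : sin (bphi phi / 2) ^+ 2 + cos (bphi phi / 2) ^+ 2 = 1.
  by rewrite addrC cos2Dsin2.
have pqAc := pq_Ac B_ge0 AB1 (cos2Dsin2 _) sin_half_phi_gt0 C8_gt0 (cos2Dsin2 _)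
  sin_half_bphi rs p_ge0 q_ge0 pphi_sq qphi_sq.
have pqC8 := pq_C8_sum B_ge0 AB1 (cos2Dsin2 _) sin_half_phi_gt0 C8_gt0 (cos2Dsin2 _)
  sin_half_bphi rs p_ge0 q_ge0 pphi_sq qphi_sq.
by split; [lra | rewrite mulr1 sin_half_bphi | lra].
Qed.

End PhiRange.

End Angles.

Theorem mainTheorem9 (R : realType) (phi : R) :
  pi / 2 <= phi <= pi ->
  expm ((pi / 4)%:C * ('i / 2) *: (sigma_z R *t sigma_z R) : 'M[R[i]]_4) =
  expi (- (phi / 2)) *:
    ((expm (('i * (phi / 4)%:C) *: sigma_z R)
      *t (U1 phi *m expm (('i * (phi / 4)%:C) *: sigma_z R))) *m Cphi phi
     *m (expm (('i * (phi / 4)%:C) *: sigma_z R)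
         *t (expm (('i / 2 * (bphi phi + pi)%:C) *: sigma_y R)
             *m expm (('i * (phi / 4)%:C) *: sigma_z R)))
     *m Cphi phi
     *m ((1%:M : 'M[R[i]]_2) *t U2 phi)).
Proof.
move=> phi_range; have [off_diag sin8 cos8] := U1_rot_U2_conditions phi_range.
rewrite expm_sigma_zz expm_sigma_z expm_sigma_y Cphi_sandwich !Z_rot_Z.
rewrite (_ : pi / 4 / 2 = pi / 8); last by field.
congr ctrlmx; apply/esym; rewrite /U1 /U2 /=.
  rewrite (_ : phi / 4 + phi / 4 = phi / 2); last by field.
  exact: U1_rot_U2.
rewrite (_ : - (phi / 4) + - (phi / 4) = - (phi / 2)); last by field.
rewrite -[in expi (pi / 8)](opprK (pi / 8)).
by apply: U1_rot_U2; rewrite ?cosN ?sinN // mulrN mulNr sin8.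
Qed.
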